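(* Let $P:\mathcal V\to\{\mathtt{true},\mathtt{false}\}$ and $PA:\mathcal A\to\{\mathtt{true},\mathtt{false}\}$ be labelings, $c$ a command, and $\rho_1,\rho_2,\mu_1,\mu_2$ scalar and array states. Assume: (1) $\mathtt b\notin\mathrm{UsedVars}(c)$ and $\rho_1(\mathtt b)=\rho_2(\mathtt b)=0$; (2) $|a|_{\mu_1}>0$ and $|a|_{\mu_2}>0$ for every array $a$; (3) $P;PA\vdash_{\mathtt{true}} c$ (IFC well-typed), $\rho_1\sim_P\rho_2$ and $\mu_1\sim_{PA}\mu_2$; (4) $\langle c,\rho_1,\mu_1\rangle\approx\langle c,\rho_2,\mu_2\rangle$. Then $\langle \mathrm{FiSLH}_P(c),\rho_1,\mu_1,\mathtt{false}\rangle\approx_s\langle \mathrm{FiSLH}_P(c),\rho_2,\mu_2,\mathtt{false}\rangle$.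
   Context: Language AWhile: scalar variables $X\in\mathcal V$, array names $a\in\mathcal A$. Arithmetic expressions $e::=n\ (n\in\mathbb N)\mid X\mid \mathrm{op}_{\mathbb N}(e,\dots,e)\mid be\,?\,e_1:e_2$; boolean expressions $be::=\mathtt{true}\mid\mathtt{false}\mid\mathrm{cmp}(e,e)\mid\mathrm{op}_{\mathbb B}(be,\dots,be)$; commands $c::=\mathtt{skip}\mid X:=e\mid c_1;c_2\mid \mathtt{if}\ be\ \mathtt{then}\ c_1\ \mathtt{else}\ c_2\mid\mathtt{while}\ be\ \mathtt{do}\ c\mid X\leftarrow a[e]\mid a[e]\leftarrow e'$. A scalar state is $\rho:\mathcal V\to\mathbb N$; an array state $\mu$ gives each array $a$ a size $|a|_\mu$ and values $\mu(a)[i]$ for $0\le i<|a|_\mu$. $[\![e]\!]_\rho,[\![be]\!]_\rho$ denote the usual pure evaluation (the conditional expression produces no observation). $\rho[X\mapsto v]$, $\mu[a[i]\mapsto v]$ are updates. $\mathrm{UsedVars}(c)$ is the set of scalar variables occurring in $c$. A distinguished scalar variable $\mathtt b$ is reserved as misspeculation flag. Sequential semantics: steps $\langle c,\rho,\mu\rangle\xrightarrow{o}\langle c',\rho',\mu'\rangle$, $o$ an observation $\mathrm{branch}(v)$, $\mathrm{read}(a,i)$, $\mathrm{write}(a,i)$, or none. Rules: $X:=e\to\mathtt{skip}$ with $\rho[X\mapsto[\![e]\!]_\rho]$, no obs; if $c_1\xrightarrow{o}c_1'$ then $c_1;c_2\xrightarrow{o}c_1';c_2$; $\mathtt{skip};c\to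 c$, no obs; $\mathtt{if}\ be\ \mathtt{then}\ c_{\mathtt{true}}\ \mathtt{else}\ c_{\mathtt{false}}\to c_{v}$ with $v=[\![be]\!]_\rho$, obs $\mathrm{branch}(v)$; $\mathtt{while}\ be\ \mathtt{do}\ c\to\mathtt{if}\ be\ \mathtt{then}\ (c;\mathtt{while}\ be\ \mathtt{do}\ c)\ \mathtt{else}\ \mathtt{skip}$, no obs; $X\leftarrow a[ie]\to\mathtt{skip}$ with $\rho[X\mapsto\mu(a)[i]]$, obs $\mathrm{read}(a,i)$, where $i=[\![ie]\!]_\rho<|a|_\mu$; $a[ie]\leftarrow e\to\mathtt{skip}$ with $\mu[a[i]\mapsto[\![e]\!]_\rho]$, obs $\mathrm{write}(a,i)$, where $i=[\![ie]\!]_\rho<|a|_\mu$. $\xrightarrow{O}{}^*$ is the reflexive-transitive closure, $O$ the list of produced observations. Speculative semantics: configurations $\langle c,\rho,\mu,\beta\rangle$ with boolean misspeculation flag $\beta$; steps $\xrightarrow[d]{o}$ with optional directive $d\in\{\mathit{step},\mathit{force},\mathrm{load}(a',j),\mathrm{store}(a',j)\}$. Assignment, sequence, skip and while rules are as sequentially, keep $\beta$ and use no directive. Conditional: with $\mathit{step}$ go to $c_v$, $v=[\![be]\!]_\rho$, flag unchanged, obs $\mathrm{branch}(v)$; with $\mathit{force}$ go to $c_{\neg v}$, flag set to $\mathtt{true}$, obs $\mathrm{branch}(v)$. Read/write with $\mathit{step}$: as sequentially (requires $i<|a|_\mu$), flag unchanged. Read with $\mathrm{load}(a',j)$: only if $\beta=\mathtt{true}$,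 $i=[\![ie]\!]_\rho\ge|a|_\mu$, $j<|a'|_\mu$; sets $X$ to $\mu(a')[j]$, obs $\mathrm{read}(a,i)$. Write with $\mathrm{store}(a',j)$: only if $\beta=\mathtt{true}$, $i\ge|a|_\mu$, $j<|a'|_\mu$; sets $\mu[a'[j]\mapsto[\![e]\!]_\rho]$, obs $\mathrm{write}(a,i)$. Multi-step $\xrightarrow[D]{O}{}^*$ with $D$ the list of directives. Observational equivalences: $\langle c_1,\rho_1,\mu_1\rangle\approx\langle c_2,\rho_2,\mu_2\rangle$ iff for all $O_1,O_2$ such that $\langle c_k,\rho_k,\mu_k\rangle\xrightarrow{O_k}{}^*$ some configuration ($k=1,2$), one of $O_1,O_2$ is a prefix of the other. $\langle c_1,\rho_1,\mu_1,\beta_1\rangle\approx_s\langle c_2,\rho_2,\mu_2,\beta_2\rangle$ iff for all $D,O_1,O_2$, if $\langle c_k,\rho_k,\mu_k,\beta_k\rangle\xrightarrow[D]{O_k}{}^*$ some configuration ($k=1,2$) then $O_1=O_2$. Labels: booleans, $\mathtt{true}$=public, $\mathtt{false}$=secret; $\ell_1\sqsubseteq\ell_2$ iff $\ell_2=\mathtt{true}\Rightarrow\ell_1=\mathtt{true}$; $\ell_1\sqcup\ell_2=\ell_1\wedge\ell_2$. For $P:\mathcal V\to$ labels, $P(e)$ and $P(be)$ are public iff every scalar variable occurring in the expression is public. $\rho_1\sim_P\rho_2$ iff $\rho_1(X)=\rho_2(X)$ whenever $P(X)=\mathtt{true}$; $\mu_1\sim_{PA}\mu_2$ iff for all $a$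 with $PA(a)=\mathtt{true}$, $|a|_{\mu_1}=|a|_{\mu_2}$ and contents agree. IFC typing $P;PA\vdash_{pc}c$: $\mathtt{skip}$ always; $X:=e$ if $pc\sqcup P(e)\sqsubseteq P(X)$; $c_1;c_2$ if both typed under $pc$; $\mathtt{if}\ be\ \mathtt{then}\ c_1\ \mathtt{else}\ c_2$ if $c_1,c_2$ typed under $pc\sqcup P(be)$; $\mathtt{while}\ be\ \mathtt{do}\ c$ if $c$ typed under $pc\sqcup P(be)$; $X\leftarrow a[i]$ if $pc\sqcup P(i)\sqcup PA(a)\sqsubseteq P(X)$; $a[i]\leftarrow e$ if $pc\sqcup P(i)\sqcup P(e)\sqsubseteq PA(a)$. Index-SLH recipe with parameters $B(be)$, $R(X,i)$, $W(i,e)$: $[\![\mathtt{skip}]\!]=\mathtt{skip}$; $[\![X:=e]\!]=X:=e$; $[\![c_1;c_2]\!]=[\![c_1]\!];[\![c_2]\!]$; $[\![\mathtt{if}\ be\ \mathtt{then}\ c_1\ \mathtt{else}\ c_2]\!]=\mathtt{if}\ B(be)\ \mathtt{then}\ (\mathtt b:=B(be)\,?\,\mathtt b:1;[\![c_1]\!])\ \mathtt{else}\ (\mathtt b:=B(be)\,?\,1:\mathtt b;[\![c_2]\!])$; $[\![\mathtt{while}\ be\ \mathtt{do}\ c]\!]=(\mathtt{while}\ B(be)\ \mathtt{do}\ (\mathtt b:=B(be)\,?\,\mathtt b:1;[\![c]\!]));\ \mathtt b:=B(be)\,?\,1:\mathtt b$; $[\![X\leftarrow a[i]]\!]=X\leftarrow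 a[R(X,i)]$; $[\![a[i]\leftarrow e]\!]=a[W(i,e)]\leftarrow e$. Write $m(i)=(\mathtt b==1)\,?\,0:i$. $\mathrm{FiSLH}_P$ is the instance with $B(be)=(\mathtt b==0\ \&\&\ be)$ if $P(be)=\mathtt{false}$ and $be$ otherwise; $R(X,i)=m(i)$ if $P(X)=\mathtt{true}$ or $P(i)=\mathtt{false}$, else $i$; $W(i,e)=m(i)$ if $P(e)=\mathtt{false}$ or $P(i)=\mathtt{false}$, else $i$. *)

From Stdlib Require Import String List Bool Arith.
Import ListNotations.
Open Scope list_scope.

Definition var := string.
Definition arr := string.

Definition msf : var := "b"%string.

Inductive aexp : Type :=
| ANum (n : nat)
| AId (x : var)
| ABin (op : nat -> nat -> nat) (e1 e2 : aexp)
| ACTIf (be : bexp) (e1 e2 : aexp)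
with bexp : Type :=
| BTrue
| BFalse
| BCmp (cmp : nat -> nat -> bool) (e1 e2 : aexp)
| BNot (be : bexp)
| BBin (op : bool -> bool -> bool) (be1 be2 : bexp).

Inductive com : Type :=
| Skip
| Asgn (x : var) (e : aexp)
| Seq (c1 c2 : com)
| If (be : bexp) (c1 c2 : com)
| While (be : bexp) (c : com)
| ARead (x : var) (a : arr) (i : aexp)
| AWrite (a : arr) (i : aexp) (e : aexp).

Definition state := var -> nat.
Definition astate := arr -> list nat.       (* mu: |a| = length (mu a), mu(a)[i] = nth i (mu a) 0 *)

Definition upd (rho : state) (x : var) (v : nat) : state :=
  fun y => if String.eqb x y then v else rho y.

Fixpoint list_upd (l : list nat) (i : nat) (v : nat) : list nat :=
  match l, i with
  | [], _ => []
  | _ :: t, 0 => v :: t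
  | h :: t, S i' => h :: list_upd t i' v
  end.

Definition aupd (mu : astate) (a : arr) (i : nat) (v : nat) : astate :=
  fun b => if String.eqb a b then list_upd (mu a) i v else mu b.

Fixpoint aeval (rho : state) (e : aexp) : nat :=
  match e with
  | ANum n => n
  | AId x => rho x
  | ABin op e1 e2 => op (aeval rho e1) (aeval rho e2)
  | ACTIf be e1 e2 => if beval rho be then aeval rho e1 else aeval rho e2
  end
with beval (rho : state) (be : bexp) : bool :=
  match be with
  | BTrue => true
  | BFalse => false
  | BCmp cmp e1 e2 => cmp (aeval rho e1) (aeval rho e2)
  | BNot b1 => negb (beval rho b1)
  | BBin op b1 b2 => op (beval rho b1) (beval rho b2)
  end.

Fixpoint avars (e : aexp) : list var :=
  match e with
  | ANum _ => []
  | AId x => [x]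
  | ABin _ e1 e2 => avars e1 ++ avars e2
  | ACTIf be e1 e2 => bvars be ++ avars e1 ++ avars e2
  end
with bvars (be : bexp) : list var :=
  match be with
  | BTrue | BFalse => []
  | BCmp _ e1 e2 => avars e1 ++ avars e2
  | BNot b1 => bvars b1
  | BBin _ b1 b2 => bvars b1 ++ bvars b2
  end.

Fixpoint used_vars (c : com) : list var :=
  match c with
  | Skip => []
  | Asgn x e => x :: avars e
  | Seq c1 c2 => used_vars c1 ++ used_vars c2
  | If be c1 c2 => bvars be ++ used_vars c1 ++ used_vars c2
  | While be c => bvars be ++ used_vars c
  | ARead x _ i => x :: avars i
  | AWrite _ i e => avars i ++ avars e
  end.

Inductive observation : Type :=
| OBranch (v : bool)
| ORead (a : arr) (i : nat)
| OWrite (a : arr) (i : nat).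

Inductive direction : Type :=
| DStep
| DForce
| DLoad (a : arr) (j : nat)
| DStore (a : arr) (j : nat).

(* the observation list of a single step is [] (no obs) or [o] *)
Inductive seq_step : com -> state -> astate -> list observation ->
                     com -> state -> astate -> Prop :=
| SS_Asgn x e rho mu :
    seq_step (Asgn x e) rho mu [] Skip (upd rho x (aeval rho e)) mu
| SS_Seq c1 c1' c2 rho mu os rho' mu' :
    seq_step c1 rho mu os c1' rho' mu' ->
    seq_step (Seq c1 c2) rho mu os (Seq c1' c2) rho' mu'
| SS_SeqSkip c rho mu :
    seq_step (Seq Skip c) rho mu [] c rho mu
| SS_If be c1 c2 rho mu :
    seq_step (If be c1 c2) rho mu [OBranch (beval rho be)]
             (if beval rho be then c1 else c2) rho mu
| SS_While be c rho mu :
    seq_step (While be c) rho mu [] (If be (Seq c (While be c)) Skip) rho mu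
| SS_ARead x a ie i rho mu :
    i = aeval rho ie -> i < length (mu a) ->
    seq_step (ARead x a ie) rho mu [ORead a i] Skip
             (upd rho x (nth i (mu a) 0)) mu
| SS_AWrite a ie e i rho mu :
    i = aeval rho ie -> i < length (mu a) ->
    seq_step (AWrite a ie e) rho mu [OWrite a i] Skip
             rho (aupd mu a i (aeval rho e)).

Inductive multi_seq : com -> state -> astate -> list observation ->
                      com -> state -> astate -> Prop :=
| MS_Refl c rho mu : multi_seq c rho mu [] c rho mu
| MS_Trans c1 rho1 mu1 os1 c2 rho2 mu2 os2 c3 rho3 mu3 :
    seq_step c1 rho1 mu1 os1 c2 rho2 mu2 ->
    multi_seq c2 rho2 mu2 os2 c3 rho3 mu3 ->
    multi_seq c1 rho1 mu1 (os1 ++ os2) c3 rho3 mu3.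

(* the directive list of a single step is [] (no directive) or [d] *)
Inductive spec_step : com -> state -> astate -> bool -> list direction ->
                      list observation -> com -> state -> astate -> bool -> Prop :=
| SP_Asgn x e rho mu bt :
    spec_step (Asgn x e) rho mu bt [] [] Skip (upd rho x (aeval rho e)) mu bt
| SP_Seq c1 c1' c2 rho mu bt ds os rho' mu' bt' :
    spec_step c1 rho mu bt ds os c1' rho' mu' bt' ->
    spec_step (Seq c1 c2) rho mu bt ds os (Seq c1' c2) rho' mu' bt'
| SP_SeqSkip c rho mu bt :
    spec_step (Seq Skip c) rho mu bt [] [] c rho mu bt
| SP_If be c1 c2 rho mu bt :
    spec_step (If be c1 c2) rho mu bt [DStep] [OBranch (beval rho be)]
              (if beval rho be then c1 else c2) rho mu bt
| SP_If_F be c1 c2 rho mu bt :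
    spec_step (If be c1 c2) rho mu bt [DForce] [OBranch (beval rho be)]
              (if beval rho be then c2 else c1) rho mu true
| SP_While be c rho mu bt :
    spec_step (While be c) rho mu bt [] []
              (If be (Seq c (While be c)) Skip) rho mu bt
| SP_ARead x a ie i rho mu bt :
    i = aeval rho ie -> i < length (mu a) ->
    spec_step (ARead x a ie) rho mu bt [DStep] [ORead a i] Skip
              (upd rho x (nth i (mu a) 0)) mu bt
| SP_ARead_U x a ie i a' j rho mu :
    i = aeval rho ie -> length (mu a) <= i -> j < length (mu a') ->
    spec_step (ARead x a ie) rho mu true [DLoad a' j] [ORead a i] Skip
              (upd rho x (nth j (mu a') 0)) mu true
| SP_AWrite a ie e i rho mu bt :
    i = aeval rho ie -> i < length (mu a) ->
    spec_step (AWrite a ie e) rho mu bt [DStep] [OWrite a i] Skip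
              rho (aupd mu a i (aeval rho e)) bt
| SP_AWrite_U a ie e i a' j rho mu :
    i = aeval rho ie -> length (mu a) <= i -> j < length (mu a') ->
    spec_step (AWrite a ie e) rho mu true [DStore a' j] [OWrite a i] Skip
              rho (aupd mu a' j (aeval rho e)) true.

Inductive multi_spec : com -> state -> astate -> bool -> list direction ->
                       list observation -> com -> state -> astate -> bool -> Prop :=
| MP_Refl c rho mu bt : multi_spec c rho mu bt [] [] c rho mu bt
| MP_Trans c1 rho1 mu1 bt1 ds1 os1 c2 rho2 mu2 bt2 ds2 os2 c3 rho3 mu3 bt3 :
    spec_step c1 rho1 mu1 bt1 ds1 os1 c2 rho2 mu2 bt2 ->
    multi_spec c2 rho2 mu2 bt2 ds2 os2 c3 rho3 mu3 bt3 ->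
    multi_spec c1 rho1 mu1 bt1 (ds1 ++ ds2) (os1 ++ os2) c3 rho3 mu3 bt3.

Definition prefix {A : Type} (l1 l2 : list A) : Prop := exists l, l2 = l1 ++ l.

Definition seq_same_obs (c1 : com) (rho1 : state) (mu1 : astate)
                        (c2 : com) (rho2 : state) (mu2 : astate) : Prop :=
  forall O1 O2 c1' rho1' mu1' c2' rho2' mu2',
    multi_seq c1 rho1 mu1 O1 c1' rho1' mu1' ->
    multi_seq c2 rho2 mu2 O2 c2' rho2' mu2' ->
    prefix O1 O2 \/ prefix O2 O1.

Definition spec_same_obs (c1 : com) (rho1 : state) (mu1 : astate) (bt1 : bool)
                         (c2 : com) (rho2 : state) (mu2 : astate) (bt2 : bool) : Prop :=
  forall D O1 O2 c1' rho1' mu1' bt1' c2' rho2' mu2' bt2',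
    multi_spec c1 rho1 mu1 bt1 D O1 c1' rho1' mu1' bt1' ->
    multi_spec c2 rho2 mu2 bt2 D O2 c2' rho2' mu2' bt2' ->
    O1 = O2.

(* ---------- Labels (true = public, false = secret) ---------- *)
Definition label := bool.
Definition join (l1 l2 : label) : label := l1 && l2.
Definition can_flow (l1 l2 : label) : Prop := l2 = true -> l1 = true.

Definition label_of_aexp (P : var -> label) (e : aexp) : label := forallb P (avars e).
Definition label_of_bexp (P : var -> label) (be : bexp) : label := forallb P (bvars be).

Definition pub_equiv (P : var -> label) (rho1 rho2 : state) : Prop :=
  forall x, P x = true -> rho1 x = rho2 x.

Definition apub_equiv (PA : arr -> label) (mu1 mu2 : astate) : Prop :=
  forall a, PA a = true ->
    length (mu1 a) = length (mu2 a) /\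
    (forall i, i < length (mu1 a) -> nth i (mu1 a) 0 = nth i (mu2 a) 0).

Inductive well_typed (P : var -> label) (PA : arr -> label) : label -> com -> Prop :=
| WT_Skip pc : well_typed P PA pc Skip
| WT_Asgn pc x e :
    can_flow (join pc (label_of_aexp P e)) (P x) ->
    well_typed P PA pc (Asgn x e)
| WT_Seq pc c1 c2 :
    well_typed P PA pc c1 -> well_typed P PA pc c2 ->
    well_typed P PA pc (Seq c1 c2)
| WT_If pc be c1 c2 :
    well_typed P PA (join pc (label_of_bexp P be)) c1 ->
    well_typed P PA (join pc (label_of_bexp P be)) c2 ->
    well_typed P PA pc (If be c1 c2)
| WT_While pc be c :
    well_typed P PA (join pc (label_of_bexp P be)) c ->
    well_typed P PA pc (While be c)
| WT_ARead pc x a i :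
    can_flow (join (join pc (label_of_aexp P i)) (PA a)) (P x) ->
    well_typed P PA pc (ARead x a i)
| WT_AWrite pc a i e :
    can_flow (join (join pc (label_of_aexp P i)) (label_of_aexp P e)) (PA a) ->
    well_typed P PA pc (AWrite a i e).

Fixpoint index_slh (B : bexp -> bexp) (R : var -> aexp -> aexp)
                   (W : aexp -> aexp -> aexp) (c : com) : com :=
  match c with
  | Skip => Skip
  | Asgn x e => Asgn x e
  | Seq c1 c2 => Seq (index_slh B R W c1) (index_slh B R W c2)
  | If be c1 c2 =>
      If (B be)
         (Seq (Asgn msf (ACTIf (B be) (AId msf) (ANum 1))) (index_slh B R W c1))
         (Seq (Asgn msf (ACTIf (B be) (ANum 1) (AId msf))) (index_slh B R W c2))
  | While be c1 =>
      Seq (While (B be)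
                 (Seq (Asgn msf (ACTIf (B be) (AId msf) (ANum 1))) (index_slh B R W c1)))
          (Asgn msf (ACTIf (B be) (ANum 1) (AId msf)))
  | ARead x a i => ARead x a (R x i)
  | AWrite a i e => AWrite a (W i e) e
  end.

Definition mask (i : aexp) : aexp :=
  ACTIf (BCmp Nat.eqb (AId msf) (ANum 1)) (ANum 0) i.

Definition fislh_B (P : var -> label) (be : bexp) : bexp :=
  if label_of_bexp P be then be
  else BBin andb (BCmp Nat.eqb (AId msf) (ANum 0)) be.

Definition fislh_R (P : var -> label) (x : var) (i : aexp) : aexp :=
  if P x || negb (label_of_aexp P i) then mask i else i.

Definition fislh_W (P : var -> label) (i e : aexp) : aexp :=
  if negb (label_of_aexp P e) || negb (label_of_aexp P i) then mask i else i.

Definition fislh (P : var -> label) (c : com) : com :=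
  index_slh (fislh_B P) (fislh_R P) (fislh_W P) c.

(* Read a speculative run of [fislh P c] as a run of an "ideal" speculative
   semantics of [c] itself, in which guards and indices are evaluated as FiSLH rewrites
   them and a forced branch sets the flag [b] to 1 at once; the instrumenting assignments
   to [b] become silent steps of a simulation.  Two ideal runs under the same directives
   stay in lockstep.  Before any misspeculation the flag is 0, ideal steps are sequential
   steps, and their observations agree by the sequential hypothesis.  Afterwards the flag
   is 1 in both runs: every secret guard evaluates to false and every index that could
   leak is masked to 0, so observations depend on public data only, which the IFC typing
   keeps equal.  Nonempty arrays make masked indices in bounds, so an out-of-bounds access
   reads only into secret variables and writes only public values. *)

From Stdlib Require Import String List Bool Arith Lia FunctionalExtensionality.
Import ListNotations.

Lemma upd_eq (rho : state) x v : upd rho x v x = v.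
Proof. unfold upd; now rewrite String.eqb_refl. Qed.

Lemma upd_neq (rho : state) x y v : x <> y -> upd rho x v y = rho y.
Proof. intro Hxy; unfold upd; now rewrite (proj2 (String.eqb_neq x y) Hxy). Qed.

Lemma upd_same (rho : state) x : upd rho x (rho x) = rho.
Proof.
  apply functional_extensionality; intro y; unfold upd.
  destruct (String.eqb_spec x y); congruence.
Qed.

Lemma length_list_upd l i v : length (list_upd l i v) = length l.
Proof. revert i; induction l; destruct i; simpl; auto. Qed.

Lemma length_aupd (mu : astate) a i v b : length (aupd mu a i v b) = length (mu b).
Proof.
  unfold aupd; destruct (String.eqb_spec a b); subst; auto using length_list_upd.
Qed.

Scheme aexp_mut_ind := Induction for aexp Sort Prop
  with bexp_mut_ind := Induction for bexp Sort Prop.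
Combined Scheme aexp_bexp_mut_ind from aexp_mut_ind, bexp_mut_ind.

Lemma eval_pub_equiv P rho1 rho2 : pub_equiv P rho1 rho2 ->
  (forall e, label_of_aexp P e = true -> aeval rho1 e = aeval rho2 e) /\
  (forall be, label_of_bexp P be = true -> beval rho1 be = beval rho2 be).
Proof.
  unfold label_of_aexp, label_of_bexp; intro Hpub.
  apply aexp_bexp_mut_ind; simpl; intros;
    repeat match goal with
    | H : forallb _ (_ ++ _) = true |- _ => rewrite forallb_app in H
    | H : (_ && _)%bool = true |- _ => apply andb_prop in H; destruct H
    | IH : ?A = true -> _, H : ?A = true |- _ => rewrite (IH H); clear IH
    end; auto.
Qed.

Lemma aeval_pub_equiv P rho1 rho2 e : pub_equiv P rho1 rho2 ->
  label_of_aexp P e = true -> aeval rho1 e = aeval rho2 e.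
Proof. intro Hpub; apply (eval_pub_equiv P rho1 rho2 Hpub). Qed.

Lemma beval_pub_equiv P rho1 rho2 be : pub_equiv P rho1 rho2 ->
  label_of_bexp P be = true -> beval rho1 be = beval rho2 be.
Proof. intro Hpub; apply (eval_pub_equiv P rho1 rho2 Hpub). Qed.

Lemma pub_equiv_upd P rho1 rho2 x v1 v2 : pub_equiv P rho1 rho2 ->
  (P x = true -> v1 = v2) -> pub_equiv P (upd rho1 x v1) (upd rho2 x v2).
Proof.
  intros Hpub Hv y Hy; unfold upd.
  destruct (String.eqb_spec x y); subst; auto.
Qed.

Lemma apub_equiv_eq PA mu1 mu2 a : apub_equiv PA mu1 mu2 -> PA a = true -> mu1 a = mu2 a.
Proof. intros Hapub Ha; destruct (Hapub a Ha); now apply nth_ext with 0 0. Qed.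

Lemma apub_equiv_aupd PA mu1 mu2 a i v1 v2 : apub_equiv PA mu1 mu2 ->
  (PA a = true -> v1 = v2) -> apub_equiv PA (aupd mu1 a i v1) (aupd mu2 a i v2).
Proof.
  intros Hapub Hv b Hb; unfold aupd.
  destruct (String.eqb_spec a b); subst; auto.
  rewrite (apub_equiv_eq _ _ _ _ Hapub Hb), (Hv Hb); auto.
Qed.

Lemma well_typed_weaken P PA pc pc' c :
  well_typed P PA pc c -> can_flow pc' pc -> well_typed P PA pc' c.
Proof.
  intro Hwt; revert pc'.
  induction Hwt; intros pc' Hpc; constructor; unfold can_flow, join in *;
    try apply IHHwt; try apply IHHwt1; try apply IHHwt2;
    intros; repeat rewrite andb_true_iff in *; intuition.
Qed.

Lemma multi_seq_seq_l c1 c2 rho mu O c1' rho' mu' :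
  multi_seq c1 rho mu O c1' rho' mu' -> multi_seq (Seq c1 c2) rho mu O (Seq c1' c2) rho' mu'.
Proof. induction 1; econstructor; eauto using seq_step. Qed.

Lemma seq_same_obs_seq_l c1 c2 rho1 mu1 rho2 mu2 :
  seq_same_obs (Seq c1 c2) rho1 mu1 (Seq c1 c2) rho2 mu2 -> seq_same_obs c1 rho1 mu1 c1 rho2 mu2.
Proof. intros Hobs ? ? ? ? ? ? ? ? M1 M2; eapply Hobs; apply multi_seq_seq_l; eauto. Qed.

Lemma seq_same_obs_step c rho1 mu1 rho2 mu2 o c1 rho1' mu1' c2 rho2' mu2' :
  seq_same_obs c rho1 mu1 c rho2 mu2 ->
  seq_step c rho1 mu1 o c1 rho1' mu1' -> seq_step c rho2 mu2 o c2 rho2' mu2' ->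
  seq_same_obs c1 rho1' mu1' c2 rho2' mu2'.
Proof.
  intros Hobs S1 S2 O1 O2 ? ? ? ? ? ? M1 M2.
  destruct (Hobs _ _ _ _ _ _ _ _ (MS_Trans _ _ _ _ _ _ _ _ _ _ _ S1 M1)
                                 (MS_Trans _ _ _ _ _ _ _ _ _ _ _ S2 M2)) as [[l Hl] | [l Hl]];
    rewrite <- app_assoc in Hl; apply app_inv_head in Hl; [left | right]; now exists l.
Qed.

Lemma seq_same_obs_first c rho1 mu1 rho2 mu2 o1 o2 c1 rho1' mu1' c2 rho2' mu2' :
  seq_same_obs c rho1 mu1 c rho2 mu2 ->
  seq_step c rho1 mu1 [o1] c1 rho1' mu1' -> seq_step c rho2 mu2 [o2] c2 rho2' mu2' ->
  o1 = o2.
Proof.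
  intros Hobs S1 S2.
  destruct (Hobs _ _ _ _ _ _ _ _ (MS_Trans _ _ _ _ _ _ _ _ _ _ _ S1 (MS_Refl _ _ _))
                                 (MS_Trans _ _ _ _ _ _ _ _ _ _ _ S2 (MS_Refl _ _ _)))
    as [[l Hl] | [l Hl]]; now inversion Hl.
Qed.

Section FiSLHEval.

Variable P : var -> label.

Lemma beval_fislh_B_unflagged rho be : rho msf = 0 -> beval rho (fislh_B P be) = beval rho be.
Proof. intro H; unfold fislh_B; destruct (label_of_bexp P be); simpl; now rewrite ?H. Qed.

Lemma aeval_mask_unflagged rho i : rho msf = 0 -> aeval rho (mask i) = aeval rho i.
Proof. intro H; simpl; now rewrite H. Qed.

Lemma aeval_fislh_R_unflagged rho x i : rho msf = 0 -> aeval rho (fislh_R P x i) = aeval rho i.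
Proof. intro H; unfold fislh_R; destruct (_ || _)%bool; auto using aeval_mask_unflagged. Qed.

Lemma aeval_fislh_W_unflagged rho i e : rho msf = 0 -> aeval rho (fislh_W P i e) = aeval rho i.
Proof. intro H; unfold fislh_W; destruct (_ || _)%bool; auto using aeval_mask_unflagged. Qed.

Lemma aeval_mask_flagged rho i : rho msf = 1 -> aeval rho (mask i) = 0.
Proof. intro H; simpl; now rewrite H. Qed.

Variables rho1 rho2 : state.
Hypothesis Hpub : pub_equiv P rho1 rho2.
Hypotheses (Hflag1 : rho1 msf = 1) (Hflag2 : rho2 msf = 1).

Lemma beval_fislh_B_flagged be : beval rho1 (fislh_B P be) = beval rho2 (fislh_B P be).
Proof.
  unfold fislh_B; destruct (label_of_bexp P be) eqn:Hbe; simpl.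
  - now apply beval_pub_equiv with P.
  - now rewrite Hflag1, Hflag2.
Qed.

Lemma aeval_fislh_R_flagged x i : aeval rho1 (fislh_R P x i) = aeval rho2 (fislh_R P x i).
Proof.
  unfold fislh_R; destruct (P x || negb (label_of_aexp P i))%bool eqn:Hmask.
  - now rewrite !aeval_mask_flagged.
  - apply aeval_pub_equiv with P; auto.
    apply orb_false_iff in Hmask; destruct Hmask as [_ Hi]; now apply negb_false_iff.
Qed.

Lemma aeval_fislh_W_flagged i e : aeval rho1 (fislh_W P i e) = aeval rho2 (fislh_W P i e).
Proof.
  unfold fislh_W; destruct (negb (label_of_aexp P e) || negb (label_of_aexp P i))%bool eqn:Hmask.
  - now rewrite !aeval_mask_flagged.
  - apply aeval_pub_equiv with P; auto.
    apply orb_false_iff in Hmask; destruct Hmask as [_ Hi]; now apply negb_false_iff.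
Qed.

End FiSLHEval.

Lemma aeval_fislh_R_pub P rho x i : P x = true -> rho msf = 1 -> aeval rho (fislh_R P x i) = 0.
Proof. intros Hx H; unfold fislh_R; rewrite Hx; now apply aeval_mask_flagged. Qed.

Lemma fislh_W_unmasked_pub P rho i e : rho msf = 1 -> aeval rho (fislh_W P i e) <> 0 ->
  label_of_aexp P e = true.
Proof.
  unfold fislh_W; intros H Hn; destruct (label_of_aexp P e); auto.
  now destruct (Hn (aeval_mask_flagged _ _ H)).
Qed.

Section Ideal.

Variable P : var -> label.

(* The speculative semantics of [c] as seen through [fislh P c]: guards and indices are
   evaluated as rewritten by FiSLH, and a forced branch sets the flag [b] to 1 at once,
   which is the combined effect of the forcing step and of the flag update in the branch. *)
Inductive ideal_step : com -> state -> astate -> bool -> list direction ->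
  list observation -> com -> state -> astate -> bool -> Prop :=
| I_Asgn x e rho mu bt :
    ideal_step (Asgn x e) rho mu bt [] [] Skip (upd rho x (aeval rho e)) mu bt
| I_Seq c1 c1' c2 rho mu bt ds os rho' mu' bt' :
    ideal_step c1 rho mu bt ds os c1' rho' mu' bt' ->
    ideal_step (Seq c1 c2) rho mu bt ds os (Seq c1' c2) rho' mu' bt'
| I_SeqSkip c rho mu bt :
    ideal_step (Seq Skip c) rho mu bt [] [] c rho mu bt
| I_If be c1 c2 rho mu bt :
    ideal_step (If be c1 c2) rho mu bt [DStep] [OBranch (beval rho (fislh_B P be))]
      (if beval rho (fislh_B P be) then c1 else c2) rho mu bt
| I_If_F be c1 c2 rho mu bt :
    ideal_step (If be c1 c2) rho mu bt [DForce] [OBranch (beval rho (fislh_B P be))]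
      (if beval rho (fislh_B P be) then c2 else c1) (upd rho msf 1) mu true
| I_While be c rho mu bt :
    ideal_step (While be c) rho mu bt [] [] (If be (Seq c (While be c)) Skip) rho mu bt
| I_ARead x a ie i rho mu bt :
    i = aeval rho (fislh_R P x ie) -> i < length (mu a) ->
    ideal_step (ARead x a ie) rho mu bt [DStep] [ORead a i] Skip
      (upd rho x (nth i (mu a) 0)) mu bt
| I_ARead_U x a ie i a' j rho mu :
    i = aeval rho (fislh_R P x ie) -> length (mu a) <= i -> j < length (mu a') ->
    ideal_step (ARead x a ie) rho mu true [DLoad a' j] [ORead a i] Skip
      (upd rho x (nth j (mu a') 0)) mu true
| I_AWrite a ie e i rho mu bt :
    i = aeval rho (fislh_W P ie e) -> i < length (mu a) ->
    ideal_step (AWrite a ie e) rho mu bt [DStep] [OWrite a i] Skip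
      rho (aupd mu a i (aeval rho e)) bt
| I_AWrite_U a ie e i a' j rho mu :
    i = aeval rho (fislh_W P ie e) -> length (mu a) <= i -> j < length (mu a') ->
    ideal_step (AWrite a ie e) rho mu true [DStore a' j] [OWrite a i] Skip
      rho (aupd mu a' j (aeval rho e)) true.

Inductive multi_ideal : com -> state -> astate -> bool -> list direction ->
  list observation -> com -> state -> astate -> bool -> Prop :=
| MI_Refl c rho mu bt : multi_ideal c rho mu bt [] [] c rho mu bt
| MI_Trans c1 rho1 mu1 bt1 ds1 os1 c2 rho2 mu2 bt2 ds2 os2 c3 rho3 mu3 bt3 :
    ideal_step c1 rho1 mu1 bt1 ds1 os1 c2 rho2 mu2 bt2 ->
    multi_ideal c2 rho2 mu2 bt2 ds2 os2 c3 rho3 mu3 bt3 ->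
    multi_ideal c1 rho1 mu1 bt1 (ds1 ++ ds2) (os1 ++ os2) c3 rho3 mu3 bt3.

Local Notation flag_then be := (Asgn msf (ACTIf (fislh_B P be) (AId msf) (ANum 1))).
Local Notation flag_else be := (Asgn msf (ACTIf (fislh_B P be) (ANum 1) (AId msf))).
Local Notation fislh_loop be c := (While (fislh_B P be) (Seq (flag_then be) (fislh P c))).

(* [fislh_sim tc rt sc rs]: the target configuration [tc, rt] is a residual of the
   translation of the source configuration [sc, rs], possibly with flag updates still
   pending; [rs] already contains the effect of these updates. *)
Inductive fislh_sim : com -> state -> com -> state -> Prop :=
| sim_skip rho : fislh_sim Skip rho Skip rho
| sim_asgn x e rho : fislh_sim (Asgn x e) rho (Asgn x e) rho
| sim_read x a i rho : fislh_sim (ARead x a (fislh_R P x i)) rho (ARead x a i) rho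
| sim_write a i e rho : fislh_sim (AWrite a (fislh_W P i e) e) rho (AWrite a i e) rho
| sim_if be c1 c2 rho :
    fislh_sim (If (fislh_B P be) (Seq (flag_then be) (fislh P c1))
                                 (Seq (flag_else be) (fislh P c2))) rho (If be c1 c2) rho
| sim_while be c rho : fislh_sim (Seq (fislh_loop be c) (flag_else be)) rho (While be c) rho
| sim_seq tc sc c rt rs :
    fislh_sim tc rt sc rs -> fislh_sim (Seq tc (fislh P c)) rt (Seq sc c) rs
| sim_flag_pending e tc sc rt rs :
    fislh_sim tc (upd rt msf (aeval rt e)) sc rs -> fislh_sim (Seq (Asgn msf e) tc) rt sc rs
| sim_flag_last e rt : fislh_sim (Asgn msf e) rt Skip (upd rt msf (aeval rt e))
| sim_skip_l tc sc rt rs : fislh_sim tc rt sc rs -> fislh_sim (Seq Skip tc) rt sc rs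
| sim_loop_if be c rho :
    fislh_sim (Seq (If (fislh_B P be) (Seq (Seq (flag_then be) (fislh P c)) (fislh_loop be c))
                       Skip) (flag_else be)) rho
              (If be (Seq c (While be c)) Skip) rho
| sim_loop_body tc sc be c rt rs :
    fislh_sim tc rt sc rs ->
    fislh_sim (Seq (Seq tc (fislh_loop be c)) (flag_else be)) rt (Seq sc (While be c)) rs.

Lemma fislh_sim_refl c rho : fislh_sim (fislh P c) rho c rho.
Proof. revert rho; induction c; constructor; auto. Qed.

(* The pending flag update after a branch on [fislh_B P be] with value [v] keeps [b] if the
   branch taken agrees with [v] and sets it to 1 otherwise. *)
Lemma sim_flag_then be v tc sc rt rs : beval rt (fislh_B P be) = v ->
  fislh_sim tc (if v then rt else upd rt msf 1) sc rs ->
  fislh_sim (Seq (flag_then be) tc) rt sc rs.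
Proof.
  intros Hv Hsim; apply sim_flag_pending; simpl; rewrite Hv.
  destruct v; [now rewrite upd_same | exact Hsim].
Qed.

Lemma sim_flag_else be v tc sc rt rs : beval rt (fislh_B P be) = v ->
  fislh_sim tc (if v then upd rt msf 1 else rt) sc rs ->
  fislh_sim (Seq (flag_else be) tc) rt sc rs.
Proof.
  intros Hv Hsim; apply sim_flag_pending; simpl; rewrite Hv.
  destruct v; [exact Hsim | now rewrite upd_same].
Qed.

Lemma sim_flag_else_last be v rt : beval rt (fislh_B P be) = v ->
  fislh_sim (flag_else be) rt Skip (if v then upd rt msf 1 else rt).
Proof.
  intro Hv; replace (if v then upd rt msf 1 else rt)
    with (upd rt msf (aeval rt (ACTIf (fislh_B P be) (ANum 1) (AId msf)))).
  - apply sim_flag_last.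
  - simpl; rewrite Hv; destruct v; auto using upd_same.
Qed.

Ltac ideal_step_to sc rs := left; exists sc, rs; split; [econstructor; eauto |].

Lemma fislh_sim_step tc rt sc rs : fislh_sim tc rt sc rs ->
  forall mu bt d o tc' rt' mu' bt', spec_step tc rt mu bt d o tc' rt' mu' bt' ->
  (exists sc' rs', ideal_step sc rs mu bt d o sc' rs' mu' bt' /\ fislh_sim tc' rt' sc' rs') \/
  (d = [] /\ o = [] /\ mu' = mu /\ bt' = bt /\ fislh_sim tc' rt' sc rs).
Proof.
  induction 1 as [| | | | | | tc sc c rt rs Hsim IH | e tc sc rt rs Hsim _ | | tc sc rt rs Hsim _ | |
                  tc sc be c rt rs Hsim IH];
    intros mu bt d o tc' rt' mu' bt' Hstep; inversion Hstep; subst.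
  - ideal_step_to Skip (upd rho x (aeval rho e)); apply sim_skip.
  - ideal_step_to Skip (upd rho x (nth (aeval rho (fislh_R P x i)) (mu' a) 0)); apply sim_skip.
  - ideal_step_to Skip (upd rho x (nth j (mu' a') 0)); apply sim_skip.
  - ideal_step_to Skip rt'; apply sim_skip.
  - ideal_step_to Skip rt'; apply sim_skip.
  - ideal_step_to (if beval rt' (fislh_B P be) then c1 else c2) rt'.
    destruct (beval rt' (fislh_B P be)) eqn:Hv;
      [eapply sim_flag_then | eapply sim_flag_else]; eauto using fislh_sim_refl.
  - ideal_step_to (if beval rt' (fislh_B P be) then c2 else c1) (upd rt' msf 1).
    destruct (beval rt' (fislh_B P be)) eqn:Hv;
      [eapply sim_flag_else | eapply sim_flag_then]; eauto using fislh_sim_refl.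
  - match goal with H : spec_step (While _ _) _ _ _ _ _ _ _ _ _ |- _ => inversion H; subst end.
    ideal_step_to (If be (Seq c (While be c)) Skip) rt'; apply sim_loop_if.
  - match goal with H : spec_step tc _ _ _ _ _ _ _ _ _ |- _ =>
      destruct (IH _ _ _ _ _ _ _ _ H) as [(sc' & rs' & Hi & Hsim') | (-> & -> & -> & -> & Hsim')] end.
    + ideal_step_to (Seq sc' c) rs'; now apply sim_seq.
    + right; repeat split; now apply sim_seq.
  - inversion Hsim; subst.
    left; do 2 eexists; split; [apply I_SeqSkip | apply fislh_sim_refl].
  - match goal with H : spec_step (Asgn _ _) _ _ _ _ _ _ _ _ _ |- _ => inversion H; subst end.
    right; repeat split; now apply sim_skip_l.
  - right; repeat split; apply sim_skip.
  - match goal with H : spec_step Skip _ _ _ _ _ _ _ _ _ |- _ => inversion H end.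
  - right; repeat split; exact Hsim.
  - match goal with H : spec_step (If _ _ _) _ _ _ _ _ _ _ _ _ |- _ => inversion H; subst end.
    + ideal_step_to (if beval rt' (fislh_B P be) then Seq c (While be c) else Skip) rt'.
      destruct (beval rt' (fislh_B P be)) eqn:Hv.
      * apply sim_loop_body; eapply sim_flag_then; eauto using fislh_sim_refl.
      * apply sim_skip_l; eapply sim_flag_else_last with (v := false); eauto.
    + ideal_step_to (if beval rt' (fislh_B P be) then Skip else Seq c (While be c))
        (upd rt' msf 1).
      destruct (beval rt' (fislh_B P be)) eqn:Hv.
      * apply sim_skip_l; eapply sim_flag_else_last with (v := true); eauto.
      * apply sim_loop_body; eapply sim_flag_then; eauto using fislh_sim_refl.
  - match goal with H : spec_step (Seq _ _) _ _ _ _ _ _ _ _ _ |- _ => inversion H; subst end.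
    + match goal with H : spec_step tc _ _ _ _ _ _ _ _ _ |- _ =>
        destruct (IH _ _ _ _ _ _ _ _ H)
          as [(sc' & rs' & Hi & Hsim') | (-> & -> & -> & -> & Hsim')] end.
      * ideal_step_to (Seq sc' (While be c)) rs'; now apply sim_loop_body.
      * right; repeat split; now apply sim_loop_body.
    + inversion Hsim; subst.
      left; do 2 eexists; split; [apply I_SeqSkip | apply sim_while].
Qed.

Lemma multi_spec_fislh_ideal tc rt mu bt D O tc' rt' mu' bt' :
  multi_spec tc rt mu bt D O tc' rt' mu' bt' -> forall sc rs, fislh_sim tc rt sc rs ->
  exists sc' rs', multi_ideal sc rs mu bt D O sc' rs' mu' bt'.
Proof.
  induction 1 as [| ? ? ? ? ? ? ? ? ? ? ? ? ? ? ? ? Hstep _ IH]; intros sc rs Hsim.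
  - do 2 eexists; constructor.
  - destruct (fislh_sim_step _ _ _ _ Hsim _ _ _ _ _ _ _ _ Hstep)
      as [(sc' & rs' & Hi & Hsim') | (-> & -> & -> & -> & Hsim')].
    + destruct (IH _ _ Hsim') as (sc'' & rs'' & M); do 2 eexists; econstructor; eauto.
    + exact (IH _ _ Hsim').
Qed.

End Ideal.

Fixpoint is_silent (c : com) : bool :=
  match c with
  | Asgn _ _ | While _ _ | Seq Skip _ => true
  | Seq c1 _ => is_silent c1
  | _ => false
  end.

Section Lockstep.

Variables (P : var -> label) (PA : arr -> label).

Lemma ideal_step_shape c rho mu bt d o c' rho' mu' bt' :
  ideal_step P c rho mu bt d o c' rho' mu' bt' ->
  (d = [] /\ o = [] /\ is_silent c = true) \/
  (exists dir ob, d = [dir] /\ o = [ob] /\ is_silent c = false).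
Proof.
  induction 1; simpl; eauto 10.
  destruct c1; [inversion H | ..]; auto.
Qed.

Lemma ideal_step_directives_aligned c rho1 mu1 rho2 mu2 bt1 bt2 d1 d2 o1 o2
    c1 rho1' mu1' bt1' c2 rho2' mu2' bt2' (D1 D2 : list direction) :
  ideal_step P c rho1 mu1 bt1 d1 o1 c1 rho1' mu1' bt1' ->
  ideal_step P c rho2 mu2 bt2 d2 o2 c2 rho2' mu2' bt2' ->
  d1 ++ D1 = d2 ++ D2 -> d1 = d2 /\ D1 = D2.
Proof.
  intros S1 S2 HD.
  destruct (ideal_step_shape _ _ _ _ _ _ _ _ _ _ S1) as [(-> & _ & H1) | (x1 & y1 & -> & _ & H1)];
  destruct (ideal_step_shape _ _ _ _ _ _ _ _ _ _ S2) as [(-> & _ & H2) | (x2 & y2 & -> & _ & H2)];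
    simpl in HD; try congruence; try (inversion HD; subst); auto.
Qed.

Lemma multi_ideal_length c rho mu bt D O c' rho' mu' bt' :
  multi_ideal P c rho mu bt D O c' rho' mu' bt' -> length D = length O.
Proof.
  induction 1 as [| ? ? ? ? ? ? ? ? ? ? ? ? ? ? ? ? Hstep]; auto.
  rewrite !length_app.
  destruct (ideal_step_shape _ _ _ _ _ _ _ _ _ _ Hstep) as [(-> & -> & _) | (? & ? & -> & -> & _)];
    simpl; auto.
Qed.

Lemma ideal_step_flagged c rho mu d o c' rho' mu' bt' :
  ideal_step P c rho mu true d o c' rho' mu' bt' -> bt' = true.
Proof. intro H; remember true as bt; induction H; auto. Qed.

Lemma ideal_step_seq_step c rho mu d o c' rho' mu' :
  ideal_step P c rho mu false d o c' rho' mu' false -> rho msf = 0 ->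
  seq_step c rho mu o c' rho' mu'.
Proof.
  intro H; remember false as bt eqn:Hbt; remember false as bt' eqn:Hbt' in H.
  induction H; intro Hflag; subst; try discriminate; try (constructor; auto; fail).
  - rewrite beval_fislh_B_unflagged by auto; constructor.
  - econstructor; eauto; now rewrite aeval_fislh_R_unflagged.
  - econstructor; eauto; now rewrite aeval_fislh_W_unflagged.
Qed.

Lemma ideal_step_deterministic c rho1 mu1 rho2 mu2 bt d o
    c1 rho1' mu1' bt1 c2 rho2' mu2' bt2 :
  ideal_step P c rho1 mu1 bt d o c1 rho1' mu1' bt1 ->
  ideal_step P c rho2 mu2 bt d o c2 rho2' mu2' bt2 ->
  c1 = c2 /\ bt1 = bt2.
Proof.
  intro S1; revert rho2 mu2 c2 rho2' mu2' bt2.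
  induction S1; intros ? ? ? ? ? ? S2; inversion S2; subst;
    repeat match goal with
    | H : ideal_step _ Skip _ _ _ _ _ _ _ _ _ |- _ => inversion H
    | H : [OBranch _] = [OBranch _] |- _ => inversion H; clear H
    end; auto.
  edestruct IHS1 as [-> ->]; eauto.
Qed.

Lemma ideal_step_same_obs c rho1 mu1 rho2 mu2 bt d o1 o2
    c1 rho1' mu1' bt1 c2 rho2' mu2' bt2 :
  ideal_step P c rho1 mu1 bt d o1 c1 rho1' mu1' bt1 ->
  ideal_step P c rho2 mu2 bt d o2 c2 rho2' mu2' bt2 ->
  pub_equiv P rho1 rho2 -> rho1 msf = Nat.b2n bt -> rho2 msf = Nat.b2n bt ->
  (bt = false -> seq_same_obs c rho1 mu1 c rho2 mu2) ->
  o1 = o2.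
Proof.
  intros S1; revert o2 c2 rho2' mu2' bt2.
  induction S1; intros ? ? ? ? ? S2 Hpub Hflag1 Hflag2 Hobs; inversion S2; subst;
    try match goal with H : ideal_step _ Skip _ _ _ _ _ _ _ _ _ |- _ => inversion H end;
    auto; [eauto using seq_same_obs_seq_l | ..].
  all: try match goal with H : _ msf = Nat.b2n ?b |- _ => is_var b; destruct b end;
    simpl in *; try discriminate.
  all: try (f_equal; f_equal;
            eauto using beval_fislh_B_flagged, aeval_fislh_R_flagged, aeval_fislh_W_flagged;
            fail).
  all: rewrite ?beval_fislh_B_unflagged, ?aeval_fislh_R_unflagged,
         ?aeval_fislh_W_unflagged in * by auto.
  all: f_equal; eapply seq_same_obs_first;
    [exact (Hobs eq_refl) | econstructor; eauto | econstructor; eauto].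
Qed.

Record admissible (c : com) : Prop := {
  adm_typed : well_typed P PA true c;
  adm_flag_unused : ~ In msf (used_vars c) }.

Ltac flag_unused :=
  let Hin := fresh "Hin" in
  intro Hin; simpl in *; rewrite ?in_app_iff in *; tauto.

Lemma admissible_seq_l c1 c2 : admissible (Seq c1 c2) -> admissible c1.
Proof. intros [Hwt Hu]; inversion Hwt; subst; split; [assumption | flag_unused]. Qed.

Lemma ideal_step_admissible c rho mu bt d o c' rho' mu' bt' :
  ideal_step P c rho mu bt d o c' rho' mu' bt' -> admissible c -> admissible c'.
Proof.
  induction 1; intros [Hwt Hu]; inversion Hwt; subst;
    try (split; [constructor | flag_unused]; fail).
  - destruct IHideal_step as [Hwt1 Hu1]; [eapply admissible_seq_l; split; eauto |].
    split; [now constructor | flag_unused].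
  - split; [assumption | flag_unused].
  - split; [| destruct (beval rho (fislh_B P be)); flag_unused].
    destruct (beval rho (fislh_B P be)); eapply well_typed_weaken; eauto; now intros.
  - split; [| destruct (beval rho (fislh_B P be)); flag_unused].
    destruct (beval rho (fislh_B P be)); eapply well_typed_weaken; eauto; now intros.
  - split; [| flag_unused].
    repeat constructor; auto.
    eapply well_typed_weaken; eauto.
    unfold can_flow, join; intro H; now rewrite H.
Qed.

Record low_equiv (rho1 : state) (mu1 : astate) (rho2 : state) (mu2 : astate) (bt : bool) :
  Prop := {
  le_pub : pub_equiv P rho1 rho2;
  le_flag1 : rho1 msf = Nat.b2n bt;
  le_flag2 : rho2 msf = Nat.b2n bt;
  le_apub : apub_equiv PA mu1 mu2;
  le_nonempty1 : forall a, 0 < length (mu1 a);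
  le_nonempty2 : forall a, 0 < length (mu2 a) }.

Lemma ideal_step_low_equiv c rho1 mu1 rho2 mu2 bt d o
    c1 rho1' mu1' bt1 c2 rho2' mu2' bt2 :
  ideal_step P c rho1 mu1 bt d o c1 rho1' mu1' bt1 ->
  ideal_step P c rho2 mu2 bt d o c2 rho2' mu2' bt2 ->
  admissible c -> low_equiv rho1 mu1 rho2 mu2 bt -> low_equiv rho1' mu1' rho2' mu2' bt1.
Proof.
  intros S1; revert c2 rho2' mu2' bt2.
  induction S1; intros ? ? ? ? S2 [Hwt Hu] [Hpub Hflag1 Hflag2 Hapub Hne1 Hne2];
    inversion S2; subst; inversion Hwt; subst;
    try match goal with H : ideal_step _ Skip _ _ _ _ _ _ _ _ _ |- _ => inversion H end;
    unfold can_flow, join in *; simpl in *.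
  - assert (x <> msf) by (intro; subst; tauto).
    split; rewrite ?upd_neq by auto; auto.
    apply pub_equiv_upd; auto; intro Hx.
    apply aeval_pub_equiv with P; auto.
  - eapply IHS1; eauto; [eapply admissible_seq_l; split; eauto | split; auto].
  - split; auto.
  - split; auto.
  - split; rewrite ?upd_eq; auto; now apply pub_equiv_upd.
  - split; auto.
  - assert (x <> msf) by (intro; subst; tauto).
    split; rewrite ?upd_neq by auto; auto.
    apply pub_equiv_upd; auto; intro Hx.
    match goal with Hflow : P x = true -> _ |- _ =>
      destruct (andb_prop _ _ (Hflow Hx)) as [_ Ha] end.
    erewrite apub_equiv_eq; eauto.
  - (* A public destination would have had its index masked to 0, which is in bounds. *)
    assert (x <> msf) by (intro; subst; tauto).
    split; rewrite ?upd_neq by auto; auto.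
    apply pub_equiv_upd; auto; intro Hx.
    rewrite (aeval_fislh_R_pub P rho x ie Hx Hflag1) in *.
    specialize (Hne1 a); lia.
  - split; auto; [| intro; rewrite !length_aupd; auto ..].
    apply apub_equiv_aupd; auto; intro Ha.
    match goal with Hflow : PA a = true -> _ |- _ =>
      destruct (andb_prop _ _ (Hflow Ha)) as [_ He] end.
    now apply aeval_pub_equiv with P.
  - split; auto; [| intro; rewrite !length_aupd; auto ..].
    (* The index was out of bounds, hence nonzero, hence not masked: [e] is public. *)
    apply apub_equiv_aupd; auto; intros _.
    apply aeval_pub_equiv with P; auto.
    apply fislh_W_unmasked_pub with rho ie; auto.
    specialize (Hne1 a); lia.
Qed.

Lemma ideal_step_seq_same_obs c rho1 mu1 rho2 mu2 bt d o
    c' rho1' mu1' rho2' mu2' bt' :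
  ideal_step P c rho1 mu1 bt d o c' rho1' mu1' bt' ->
  ideal_step P c rho2 mu2 bt d o c' rho2' mu2' bt' ->
  low_equiv rho1 mu1 rho2 mu2 bt ->
  (bt = false -> seq_same_obs c rho1 mu1 c rho2 mu2) ->
  bt' = false -> seq_same_obs c' rho1' mu1' c' rho2' mu2'.
Proof.
  intros S1 S2 Hle Hobs ->.
  destruct bt; [now apply ideal_step_flagged in S1 |].
  eapply seq_same_obs_step; [apply Hobs; reflexivity | |];
    eapply ideal_step_seq_step; eauto; apply Hle.
Qed.

Lemma ideal_noninterference c rho1 mu1 rho2 mu2 bt D O1 O2
    c1 rho1' mu1' bt1 c2 rho2' mu2' bt2 :
  multi_ideal P c rho1 mu1 bt D O1 c1 rho1' mu1' bt1 ->
  multi_ideal P c rho2 mu2 bt D O2 c2 rho2' mu2' bt2 ->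
  admissible c -> low_equiv rho1 mu1 rho2 mu2 bt ->
  (bt = false -> seq_same_obs c rho1 mu1 c rho2 mu2) ->
  O1 = O2.
Proof.
  intros M1; revert rho2 mu2 O2 c2 rho2' mu2' bt2.
  induction M1 as [| c rho1 mu1 bt d1 o1 c' rho1' mu1' bt' D1 O1 ? ? ? ? S1 M1 IH];
    intros rho2 mu2 O2 c2 rho2' mu2' bt2 M2 Hadm Hle Hobs.
  - apply multi_ideal_length in M2; now destruct O2.
  - assert (Hlen := multi_ideal_length _ _ _ _ _ _ _ _ _ _
      (MI_Trans _ _ _ _ _ _ _ _ _ _ _ _ _ _ _ _ _ S1 M1)).
    inversion M2 as [| ? ? ? ? d2 o2 c'' rho2'' mu2'' bt'' D2 O2' ? ? ? ? S2 M2']; subst.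
    + match goal with HD : [] = _ |- _ => rewrite <- HD in Hlen end.
      now destruct (o1 ++ O1).
    + match goal with HD : d2 ++ D2 = d1 ++ D1 |- _ =>
        destruct (ideal_step_directives_aligned _ _ _ _ _ _ _ _ _ _ _ _ _ _ _ _ _ _ _ _ _
          S2 S1 HD) as [-> ->] end.
      assert (Ho : o1 = o2) by (eapply ideal_step_same_obs; eauto; apply Hle); subst o2.
      destruct (ideal_step_deterministic _ _ _ _ _ _ _ _ _ _ _ _ _ _ _ _ S1 S2) as [<- <-].
      f_equal; eapply IH; eauto using ideal_step_admissible, ideal_step_low_equiv,
        ideal_step_seq_same_obs.
Qed.

End Lockstep.

Theorem theorem3p3 (P : var -> label) (PA : arr -> label) (c : com)
    (rho1 rho2 : state) (mu1 mu2 : astate) :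
  ~ In msf (used_vars c) ->
  rho1 msf = 0 -> rho2 msf = 0 ->
  (forall a, 0 < length (mu1 a)) ->
  (forall a, 0 < length (mu2 a)) ->
  well_typed P PA true c ->
  pub_equiv P rho1 rho2 ->
  apub_equiv PA mu1 mu2 ->
  seq_same_obs c rho1 mu1 c rho2 mu2 ->
  spec_same_obs (fislh P c) rho1 mu1 false (fislh P c) rho2 mu2 false.
Proof.
  intros Hu Hflag1 Hflag2 Hne1 Hne2 Hwt Hpub Hapub Hobs D O1 O2 c1 r1 m1 b1 c2 r2 m2 b2 M1 M2.
  destruct (multi_spec_fislh_ideal P _ _ _ _ _ _ _ _ _ _ M1 c rho1 (fislh_sim_refl P c rho1))
    as (s1 & rs1 & I1).
  destruct (multi_spec_fislh_ideal P _ _ _ _ _ _ _ _ _ _ M2 c rho2 (fislh_sim_refl P c rho2))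
    as (s2 & rs2 & I2).
  eapply (ideal_noninterference P PA); eauto; now split.
Qed.
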